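(* Let $\gamma>0$, $n\in\mathbb{N}^*$, $\lambda_n=\lambda_{n,\gamma}$, $v_n$ the positive $L^2(-1,1)$-normalized first eigenfunction of $A_{n,\gamma}$, and $x_n=\big(\lambda_n/(n\pi)^2\big)^{1/(2\gamma)}$, assumed to satisfy $x_n\le1$. Then $|v_n'(x_n)|\le\sqrt{x_n}\,\lambda_n$.
   Context: $A_{n,\gamma}\varphi=-\varphi''+(n\pi)^2|x|^{2\gamma}\varphi$ with domain $H^2(-1,1)\cap H^1_0(-1,1)$; $\lambda_{n,\gamma}$ is its smallest eigenvalue and $v_n>0$ solves $-v_n''+[(n\pi)^2|x|^{2\gamma}-\lambda_n]v_n=0$ on $(-1,1)$, $v_n(\pm1)=0$, $\|v_n\|_{L^2(-1,1)}=1$. *)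

From Stdlib Require Import Reals Lra.
Open Scope R_scope.

(* |x|^a for a > 0, with the convention 0^a = 0 (Stdlib's Rpower 0 a = 1). *)
Definition abs_pow (x a : R) : R :=
  if Rle_dec (Rabs x) 0 then 0 else Rpower (Rabs x) a.

Definition pot (n : nat) (gamma x : R) : R :=
  (INR n * PI) ^ 2 * abs_pow x (2 * gamma).

Definition dirichlet_solution (n : nat) (gamma lam : R)
  (phi phi1 phi2 : R -> R) : Prop :=
  (forall x, derivable_pt_lim phi x (phi1 x)) /\
  (forall x, derivable_pt_lim phi1 x (phi2 x)) /\
  phi (-1) = 0 /\ phi 1 = 0 /\
  (forall x, -1 < x < 1 -> - phi2 x + pot n gamma x * phi x = lam * phi x).

Definition is_eigenvalue (n : nat) (gamma lam : R) : Prop :=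
  exists phi phi1 phi2 : R -> R,
    dirichlet_solution n gamma lam phi phi1 phi2 /\
    exists x, -1 < x < 1 /\ phi x <> 0.

Definition is_smallest_eigenvalue (n : nat) (gamma lam : R) : Prop :=
  is_eigenvalue n gamma lam /\
  forall mu, is_eigenvalue n gamma mu -> lam <= mu.

From Stdlib Require Import Reals Lra Lia.
From Coquelicot Require Import Coquelicot.
Open Scope R_scope.

(* Write q = pot n gamma, so that v'' = (q - lam) v on (-1,1), and let
   x_n = (lam / (n pi)^2)^(1/(2 gamma)) be the turning point, where q(x_n) = lam.
   1. q is even, so v and v(-.) solve the same equation; their Wronskian is
      constant and vanishes at x = 1, which forces v'(0) = 0.
   2. With v'(0) = 0, v > 0 and q >= 0, a non-positive lam would make v convex
      and nondecreasing on [0,1], contradicting v(1) = 0; hence lam > 0.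
   3. On (0, x_n) we have q <= lam, so v is concave there and v'(x_n) <= 0.
   4. Since -v'' = (lam - q) v <= lam v, integrating from 0 gives
      -v'(x_n) <= lam * \int_0^{x_n} v.
   5. The normalisation \int v^2 = 1 and the AM-GM inequality give
      \int_0^{x_n} v <= sqrt x_n, whence |v'(x_n)| <= sqrt x_n * lam. *)

Lemma continuous_of_derivable (f f1 : R -> R) :
  (forall x, derivable_pt_lim f x (f1 x)) -> forall x, continuous f x.
Proof.
  intros Df x. apply continuity_pt_filterlim, derivable_continuous_pt.
  exists (f1 x). apply Df.
Qed.

Lemma derivable_pt_lim_reflect (f : R -> R) (x l : R) :
  derivable_pt_lim f (- x) l -> derivable_pt_lim (fun y => f (- y)) x (- l).
Proof.
  intros Df. replace (- l) with (l * (-1)) by ring.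
  apply (derivable_pt_lim_comp (fun y => - y) f); [|exact Df].
  replace (-1) with (- (1)) by ring.
  apply derivable_pt_lim_opp, derivable_pt_lim_id.
Qed.

Lemma derivable_pt_lim_square (f f1 : R -> R) :
  (forall x, derivable_pt_lim f x (f1 x)) ->
  forall x, derivable_pt_lim (fun y => f y ^ 2) x (INR 2 * f x ^ (2 - 1) * f1 x).
Proof.
  intros Df x.
  apply (derivable_pt_lim_comp f (fun y => y ^ 2)); [apply Df|apply derivable_pt_lim_pow].
Qed.

(* An L^2-normalised function has L^1 mass at most sqrt of the length:
   pointwise f <= s/2 f^2 + 1/(2s) with s = sqrt (b - a) (AM-GM). *)
Lemma RInt_le_sqrt_length (f : R -> R) (a b : R) :
  a < b ->
  ex_RInt f a b -> ex_RInt (fun y => f y ^ 2) a b ->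
  RInt (fun y => f y ^ 2) a b <= 1 ->
  RInt f a b <= sqrt (b - a).
Proof.
  intros Hab Ef Ef2 Hnorm.
  set (s := sqrt (b - a)).
  assert (Hs : 0 < s) by (apply sqrt_lt_R0; lra).
  assert (Hss : s * s = b - a) by (apply sqrt_sqrt; lra).
  set (g := fun y => s / 2 * f y ^ 2 + 1 / (2 * s)).
  assert (Ig : is_RInt g a b (s / 2 * RInt (fun y => f y ^ 2) a b + (b - a) * (1 / (2 * s)))).
  { apply (is_RInt_plus (V := R_NormedModule) (fun y => s / 2 * f y ^ 2) (fun _ => 1 / (2 * s))).
    - apply (is_RInt_scal (V := R_NormedModule) (fun y => f y ^ 2)).
      apply (RInt_correct (V := R_CompleteNormedModule)), Ef2.
    - apply (is_RInt_const (V := R_NormedModule)). }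
  assert (Hle : RInt f a b <= RInt g a b).
  { apply RInt_le; [lra|exact Ef|eexists; exact Ig|].
    intros x _. unfold g.
    assert (0 <= (s * f x - 1) ^ 2) by apply pow2_ge_0.
    apply (Rmult_le_reg_l (2 * s)); [lra|].
    replace (2 * s * (s / 2 * f x ^ 2 + 1 / (2 * s))) with (s * s * f x ^ 2 + 1)
      by (field; lra).
    nra. }
  rewrite (is_RInt_unique _ _ _ _ Ig) in Hle.
  replace ((b - a) * (1 / (2 * s))) with (s / 2) in Hle by (rewrite <- Hss; field; lra).
  assert (s / 2 * RInt (fun y => f y ^ 2) a b <= s / 2)
    by (apply (Rmult_le_compat_l (s / 2)) in Hnorm; lra).
  lra.
Qed.

Lemma RInt_nonneg_subinterval (f : R -> R) (a c d b : R) :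
  a <= c -> c <= d -> d <= b ->
  (forall x, continuous f x) -> (forall x, 0 <= f x) ->
  RInt f c d <= RInt f a b.
Proof.
  intros Hac Hcd Hdb Cf Pf.
  assert (Ef : forall u w, ex_RInt f u w)
    by (intros; apply (ex_RInt_continuous (V := R_CompleteNormedModule)); intros; apply Cf).
  rewrite <- (RInt_Chasles f a c b), <- (RInt_Chasles f c d b) by auto.
  assert (0 <= RInt f a c) by (apply RInt_ge_0; auto).
  assert (0 <= RInt f d b) by (apply RInt_ge_0; auto).
  unfold plus; simpl. lra.
Qed.

Lemma pot_nonneg (n : nat) (gamma x : R) : 0 <= pot n gamma x.
Proof.
  unfold pot, abs_pow. destruct (Rle_dec (Rabs x) 0).
  - nra.
  - apply Rmult_le_pos; [apply pow2_ge_0|left; apply exp_pos].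
Qed.

Lemma pot_even (n : nat) (gamma x : R) : pot n gamma (- x) = pot n gamma x.
Proof. unfold pot, abs_pow. now rewrite Rabs_Ropp. Qed.

Definition turning_point (n : nat) (gamma lam : R) : R :=
  Rpower (lam / (INR n * PI) ^ 2) (1 / (2 * gamma)).

Lemma turning_point_pos (n : nat) (gamma lam : R) : 0 < turning_point n gamma lam.
Proof. apply exp_pos. Qed.

Lemma pot_below_turning_point (n : nat) (gamma lam x : R) :
  0 < gamma -> (1 <= n)%nat -> 0 < lam ->
  0 < x < turning_point n gamma lam -> pot n gamma x <= lam.
Proof.
  intros Hg Hn Hlam Hx.
  set (xn := turning_point n gamma lam) in *.
  assert (Hnpi : 0 < INR n * PI)
    by (apply Rmult_lt_0_compat; [apply lt_0_INR; lia|apply PI_RGT_0]).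
  assert (Hxn : Rpower xn (2 * gamma) = lam / (INR n * PI) ^ 2).
  { unfold xn, turning_point. rewrite Rpower_mult.
    replace (1 / (2 * gamma) * (2 * gamma)) with 1 by (field; lra).
    apply Rpower_1, Rdiv_lt_0_compat; nra. }
  unfold pot, abs_pow. rewrite Rabs_pos_eq by lra.
  destruct (Rle_dec x 0) as [|_]; [lra|].
  assert (Hmono : Rpower x (2 * gamma) <= lam / (INR n * PI) ^ 2)
    by (rewrite <- Hxn; apply Rle_Rpower_l; lra).
  apply (Rmult_le_compat_l ((INR n * PI) ^ 2)) in Hmono; [|nra].
  replace ((INR n * PI) ^ 2 * (lam / (INR n * PI) ^ 2)) with lam in Hmono
    by (field; split; [apply PI_neq0|apply not_0_INR; lia]).
  exact Hmono.
Qed.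

Section Schroedinger.

Variables (q : R -> R) (lam : R) (v v1 v2 : R -> R).
Hypothesis v_deriv : forall x, derivable_pt_lim v x (v1 x).
Hypothesis v1_deriv : forall x, derivable_pt_lim v1 x (v2 x).
Hypothesis equation : forall x, -1 < x < 1 -> - v2 x + q x * v x = lam * v x.

Lemma second_derivative_eq (x : R) : -1 < x < 1 -> v2 x = (q x - lam) * v x.
Proof. intros Hx. specialize (equation x Hx). lra. Qed.

Definition reflected_wronskian (x : R) : R := v x * (- v1 (- x)) - v1 x * v (- x).

Lemma reflected_wronskian_deriv (x : R) :
  derivable_pt_lim reflected_wronskian x (v x * v2 (- x) - v2 x * v (- x)).
Proof.
  replace (v x * v2 (- x) - v2 x * v (- x)) with
    ((v1 x * - v1 (- x) + v x * - - v2 (- x)) - (v2 x * v (- x) + v1 x * - v1 (- x)))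
    by ring.
  apply (derivable_pt_lim_minus (fun y => v y * - v1 (- y)) (fun y => v1 y * v (- y))).
  - apply (derivable_pt_lim_mult v (fun y => - v1 (- y))); [apply v_deriv|].
    apply (derivable_pt_lim_opp (fun y => v1 (- y))), derivable_pt_lim_reflect, v1_deriv.
  - apply (derivable_pt_lim_mult v1 (fun y => v (- y))); [apply v1_deriv|].
    apply derivable_pt_lim_reflect, v_deriv.
Qed.

(* Step 1: for an even potential and Dirichlet conditions, the Wronskian is
   constant and zero at 1, so the solution has a critical point at 0. *)
Lemma deriv_zero_at_center :
  (forall x, -1 < x < 1 -> q (- x) = q x) ->
  v (-1) = 0 -> v 1 = 0 -> v 0 <> 0 -> v1 0 = 0.
Proof.
  intros q_even v_m1 v_1 v0.
  destruct (MVT_cor2 reflected_wronskian _ 0 1 Rlt_0_1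
              (fun c _ => reflected_wronskian_deriv c)) as [c [Hmvt Hc]].
  assert (Hflat : v c * v2 (- c) - v2 c * v (- c) = 0).
  { rewrite (second_derivative_eq c), (second_derivative_eq (- c)), q_even by lra.
    ring. }
  rewrite Hflat in Hmvt. unfold reflected_wronskian in Hmvt.
  replace (- (1)) with (-1) in Hmvt by ring.
  replace (- 0) with 0 in Hmvt by ring.
  rewrite v_1, v_m1 in Hmvt.
  assert (Hprod : v 0 * v1 0 = 0) by nra.
  destruct (Rmult_integral _ _ Hprod); [contradiction|assumption].
Qed.

Hypothesis v_pos : forall x, -1 < x < 1 -> 0 < v x.
Hypothesis v1_center : v1 0 = 0.

Lemma eigenvalue_pos : (forall x, 0 <= q x) -> v 1 = 0 -> 0 < lam.
Proof.
  intros q_nonneg v_1.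
  destruct (Rle_or_lt lam 0) as [Hlam|Hlam]; [exfalso|exact Hlam].
  assert (v1_nonneg : forall x, 0 < x <= 1 -> 0 <= v1 x).
  { intros x Hx.
    destruct (MVT_cor2 v1 v2 0 x ltac:(lra) (fun c _ => v1_deriv c)) as [c [Hmvt Hc]].
    assert (0 <= v2 c).
    { rewrite second_derivative_eq by lra.
      apply Rmult_le_pos; [specialize (q_nonneg c); lra|left; apply v_pos; lra]. }
    nra. }
  destruct (MVT_cor2 v v1 (1 / 2) 1 ltac:(lra) (fun c _ => v_deriv c)) as [c [Hmvt Hc]].
  assert (0 <= v1 c) by (apply v1_nonneg; lra).
  assert (0 < v (1 / 2)) by (apply v_pos; lra).
  nra.
Qed.

(* Step 3: while q <= lam the solution is concave, so it decreases after 0. *)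
Lemma deriv_nonpos_below_level (x0 : R) :
  0 < x0 <= 1 -> (forall x, 0 < x < x0 -> q x <= lam) -> v1 x0 <= 0.
Proof.
  intros Hx0 q_le.
  destruct (MVT_cor2 v1 v2 0 x0 ltac:(lra) (fun c _ => v1_deriv c)) as [c [Hmvt Hc]].
  assert (v2 c <= 0).
  { rewrite second_derivative_eq by lra.
    assert (q c <= lam) by (apply q_le; lra).
    assert (0 < v c) by (apply v_pos; lra).
    nra. }
  rewrite v1_center in Hmvt. nra.
Qed.

(* Step 4: -v'' = (lam - q) v <= lam v, integrated from the critical point 0. *)
Lemma deriv_bounded_by_mass (x0 : R) :
  0 < x0 <= 1 -> (forall x, 0 <= q x) -> - v1 x0 <= lam * RInt v 0 x0.
Proof.
  intros Hx0 q_nonneg.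
  assert (Cv := continuous_of_derivable v v1 v_deriv).
  set (G := fun x => RInt v 0 x).
  assert (DG : forall x, derivable_pt_lim G x (v x)).
  { intros x. apply is_derive_Reals, (is_derive_RInt (V := R_CompleteNormedModule) v G 0 x).
    - apply filter_forall. intros b.
      apply (RInt_correct (V := R_CompleteNormedModule)).
      apply (ex_RInt_continuous (V := R_CompleteNormedModule)). intros; apply Cv.
    - apply Cv. }
  assert (DF : forall c, 0 <= c <= x0 ->
             derivable_pt_lim (fun x => - v1 x - lam * G x) c (- v2 c - lam * v c)).
  { intros c _. apply derivable_pt_lim_minus.
    - apply derivable_pt_lim_opp, v1_deriv.
    - apply derivable_pt_lim_scal, DG. }
  destruct (MVT_cor2 _ _ 0 x0 ltac:(lra) DF) as [c [Hmvt Hc]].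
  assert (- v2 c - lam * v c <= 0).
  { rewrite second_derivative_eq by lra.
    assert (0 <= q c) by apply q_nonneg.
    assert (0 < v c) by (apply v_pos; lra).
    nra. }
  assert (HG0 : G 0 = 0) by apply (RInt_point (V := R_CompleteNormedModule)).
  rewrite HG0, v1_center in Hmvt.
  fold (G x0). nra.
Qed.

End Schroedinger.

Theorem mainTheorem8 (gamma : R) (n : nat) (lam : R) (v v1 v2 : R -> R) :
  0 < gamma ->
  (1 <= n)%nat ->
  is_smallest_eigenvalue n gamma lam ->
  dirichlet_solution n gamma lam v v1 v2 ->
  (forall x, -1 < x < 1 -> 0 < v x) ->
  (exists pr : Riemann_integrable (fun x => (v x) ^ 2) (-1) 1,
      RiemannInt pr = 1) ->
  Rpower (lam / (INR n * PI) ^ 2) (1 / (2 * gamma)) <= 1 ->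
  Rabs (v1 (Rpower (lam / (INR n * PI) ^ 2) (1 / (2 * gamma))))
    <= sqrt (Rpower (lam / (INR n * PI) ^ 2) (1 / (2 * gamma))) * lam.
Proof.
  intros Hg Hn _ [Dv [Dv1 [v_m1 [v_1 Eq]]]] v_pos [pr Hnorm] Hx1.
  fold (turning_point n gamma lam) in *.
  set (xn := turning_point n gamma lam) in *.
  assert (Hxn : 0 < xn <= 1) by (split; [apply turning_point_pos|exact Hx1]).
  assert (v1_0 : v1 0 = 0).
  { apply (deriv_zero_at_center (pot n gamma) lam v v1 v2); auto.
    - intros; apply pot_even.
    - assert (0 < v 0) by (apply v_pos; lra). lra. }
  assert (Hlam : 0 < lam)
    by (apply (eigenvalue_pos (pot n gamma) lam v v1 v2); auto using pot_nonneg).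
  assert (Hneg : v1 xn <= 0).
  { apply (deriv_nonpos_below_level (pot n gamma) lam v v1 v2); auto.
    intros; apply pot_below_turning_point; auto. }
  assert (Hbound : - v1 xn <= lam * RInt v 0 xn)
    by (apply (deriv_bounded_by_mass (pot n gamma) lam v v1 v2); auto using pot_nonneg).
  assert (Cv := continuous_of_derivable v v1 Dv).
  assert (Cv2 := continuous_of_derivable _ _ (derivable_pt_lim_square v v1 Dv)).
  assert (Hmass : RInt v 0 xn <= sqrt (xn - 0)).
  { apply RInt_le_sqrt_length; try lra;
      try (apply (ex_RInt_continuous (V := R_CompleteNormedModule)); intros; auto).
    rewrite <- Hnorm, <- RInt_Reals.
    apply RInt_nonneg_subinterval; auto; try lra. intros; apply pow2_ge_0. }
  rewrite Rminus_0_r in Hmass.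
  rewrite Rabs_left1 by lra. nra.
Qed.
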